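(* Let $\nu_1,\lambda_1,\lambda_2\ge0$ and measurable $\beta_1\colon\mathcal X\to(0,\infty)$, $\beta_2\colon\mathcal X\times\mathcal Y_1\to(0,\infty)$ satisfy $\Sigma_2(y_1,y_2)\le1$ and $\Sigma_1(y_1)\le1$ for all $(y_1,y_2)$. Fix an $(M_1,M_2,d_1,d_2,\epsilon_1,\epsilon_2)$ code and define $$F=(1+\nu_1)\log\frac1{\beta_1(X)}-\lambda_1d_1-\lambda_2d_2-\nu_1\log M_1 .$$ Then for all $\gamma_1,\gamma_2>0$ both $$\epsilon_1\ge\mathbb P[F_1\ge\log M_1+\gamma_1]-e^{-\gamma_1}$$ and $$\epsilon_2\ge\mathbb P\big[\{F\ge\log M_2+\nu_1\gamma_1+\gamma_2\}\cup\{F_1\ge\log M_1+\gamma_1\}\big]-e^{-\gamma_1}-e^{-\gamma_2}$$ hold.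
   Context: $X$ has law $P_X$ on $\mathcal X$; $\mathsf d_1\colon\mathcal X\times\mathcal Y_1\to[0,\infty)$, $\mathsf d_2\colon\mathcal X\times\mathcal Y_2\to[0,\infty)$ measurable, all $\sigma$-algebras containing singletons. $\Sigma_2(y_1,y_2)=\mathbb E\big[\exp(-\frac{\lambda_1}{1+\nu_1}\mathsf d_1(X,y_1)-\lambda_2\mathsf d_2(X,y_2))/(\beta_1(X)\beta_2(X|y_1)^{\nu_1/(1+\nu_1)})\big]$, $\Sigma_1(y_1)=\mathbb E\big[\exp(-\frac{\lambda_1}{1+\nu_1}\mathsf d_1(X,y_1))\beta_2(X|y_1)^{1/(1+\nu_1)}/\beta_1(X)\big]$, expectations over $X\sim P_X$. An $(M_1,M_2,d_1,d_2,\epsilon_1,\epsilon_2)$ code: positive integers $M_1\le M_2$, possibly randomized encoders $P_{W_1|X}$ into $\{1,\dots,M_1\}$, $P_{W_2|XW_1}$ into $\{1,\dots,\lfloor M_2/M_1\rfloor\}$, decoders $P_{Y_1|W_1}$, $P_{Y_2|W_1W_2}$, with $\mathcal A_1=\{\mathsf d_1(X,Y_1)\le d_1\}$, $\mathcal A_2=\mathcal A_1\cap\{\mathsf d_2(X,Y_2)\le d_2\}$, $\mathbb P[\mathcal A_1^c]\le\epsilon_1$, $\mathbb P[\mathcal A_2^c]\le\epsilon_2$. $F_1=\log\frac{\beta_2(X|Y_1)^{1/(1+\nu_1)}}{\beta_1(X)}-\frac{\lambda_1}{1+\nu_1}d_1$, where $Y_1$ is the code's first-stage output. Logarithms natural.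 *)

From HB Require Import structures.
From mathcomp Require Import all_boot all_order all_algebra.
From mathcomp Require Import all_classical all_reals all_analysis.
Set Implicit Arguments. Unset Strict Implicit. Unset Printing Implicit Defensive.
Import Order.TTheory GRing.Theory Num.Theory.
Local Open Scope classical_set_scope.
Local Open Scope ring_scope.

(* An (M1, M2, ...) successive-refinement code (without the distortion/error
   constraints, which are stated separately).  Randomized encoders are stochastic kernels into finite
   sets, i.e. conditional pmfs measurable in the conditioning source letter;
   decoders are stochastic kernels from finite sets, i.e. one probability
   measure per message. *)
Record sr_code (R : realType) (dX dY1 dY2 : measure_display)
    (X : measurableType dX) (Y1 : measurableType dY1) (Y2 : measurableType dY2)
    (M1 M2 : nat) := SRCode {
  enc1 : X -> 'I_M1 -> R ;
  enc1_meas : forall w1, measurable_fun setT (fun x => enc1 x w1) ;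
  enc1_ge0 : forall x w1, 0 <= enc1 x w1 ;
  enc1_sum1 : forall x, \sum_(w1 < M1) enc1 x w1 = 1 ;
  enc2 : X -> 'I_M1 -> 'I_(M2 %/ M1) -> R ;
  enc2_meas : forall w1 w2, measurable_fun setT (fun x => enc2 x w1 w2) ;
  enc2_ge0 : forall x w1 w2, 0 <= enc2 x w1 w2 ;
  enc2_sum1 : forall x w1, \sum_(w2 < M2 %/ M1) enc2 x w1 w2 = 1 ;
  dec1 : 'I_M1 -> probability Y1 R ;
  dec2 : 'I_M1 -> 'I_(M2 %/ M1) -> probability Y2 R
}.

(* Probability, under the joint law of (X, W1, W2, Y1, Y2) induced by
   X ~ PX and the code, of an event E about (X, Y1, Y2). *)
Definition code_prob (R : realType) (dX dY1 dY2 : measure_display)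
    (X : measurableType dX) (Y1 : measurableType dY1) (Y2 : measurableType dY2)
    (M1 M2 : nat) (PX : probability X R)
    (c : sr_code R X Y1 Y2 M1 M2) (E : set (X * Y1 * Y2)) : \bar R :=
  (\int[PX]_x
     \sum_(w1 < M1) \sum_(w2 < M2 %/ M1)
        ((enc1 c x w1 * enc2 c x w1 w2)%:E *
         \int[dec1 c w1]_y1 \int[dec2 c w1 w2]_y2 (\1_E (x, y1, y2))%:E))%E.

From HB Require Import structures.
From mathcomp Require Import all_boot all_order all_algebra.
From mathcomp Require Import all_classical all_reals all_analysis.
From mathcomp Require Import measurable_realfun ring lra.
Set Implicit Arguments.
Unset Strict Implicit.
Unset Printing Implicit Defensive.
Import Order.TTheory GRing.Theory Num.Theory.
Local Open Scope classical_set_scope.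
Local Open Scope ring_scope.

(* Change of measure.  Put k1 = e^-gamma1 / M1, k2 = e^-gamma2 / M2 and let
   sigma_i be the integrand of Sigma_i.  Where the distortion constraints
   hold, F1 >= log M1 + gamma1 forces k1 sigma_1 >= 1, while
   F >= log M2 + nu1 gamma1 + gamma2 together with F1 < log M1 + gamma1
   (multiplied by nu1) forces k2 sigma_2 >= 1.  So each event is dominated by
   the excess-distortion event plus k1 sigma_1 (+ k2 sigma_2), and the
   expectation of sigma_i under the code is small: the encoder weights of a
   message are at most one and a message fixes the law of the reproduction,
   so Tonelli leaves one integral Sigma_i <= 1 per message, that is at most
   M1, resp. M1 (M2 %/ M1) <= M2, in total. *)

Section ge0_integral.
Local Open Scope ereal_scope.
Context d (T : measurableType d) (R : realType).

(* Unlike [ge0_le_integral], no measurability is required. *)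
Lemma ge0_le_integralT (mu : {measure set T -> \bar R}) (f g : T -> \bar R) :
  (forall x, 0 <= f x) -> (forall x, f x <= g x) ->
  \int[mu]_x f x <= \int[mu]_x g x.
Proof.
move=> f0 fg; have g0 x : 0 <= g x by exact: le_trans (f0 x) (fg x).
rewrite !ge0_integralTE //; apply: ereal_sup_le => _ [h hf <-].
by exists h => //= x; exact: le_trans (hf x) (fg x).
Qed.

Lemma probability_integral_cst (P : probability T R) (r : \bar R) :
  \int[P]_x r = r.
Proof. by rewrite integral_cst // [X in _ * X]probability_setT mule1. Qed.

End ge0_integral.

Section integral_integral.
Local Open Scope ereal_scope.
Context d d' (X : measurableType d) (Y : measurableType d') (R : realType).

Lemma integral_integral_le1 (P : probability X R) (Q : probability Y R)
    (g : X * Y -> \bar R) :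
  measurable_fun setT g -> (forall q, 0 <= g q) ->
  (forall y, \int[P]_x g (x, y) <= 1) ->
  \int[P]_x \int[Q]_y g (x, y) <= 1.
Proof.
move=> mg g0 gle; rewrite (fubini_tonelli _ mg g0).
apply: le_trans (ge0_le_integralT Q (g := fun=> 1) _ gle) _.
  by move=> y; apply: integral_ge0.
by rewrite probability_integral_cst.
Qed.

End integral_integral.

Lemma sum1_ge0_le1 (R : numDomainType) (I : finType) (f : I -> R) i :
  (forall j, 0 <= f j) -> \sum_j f j = 1 -> f i <= 1.
Proof.
by move=> f0 <-; rewrite (bigD1 i) //= lerDl; apply: sumr_ge0 => j _.
Qed.

Lemma measurable_funV_gt0 d (T : measurableType d) (R : realType)
    (f : T -> R) :
  (forall x, 0 < f x) -> measurable_fun setT f ->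
  measurable_fun setT (fun x => (f x)^-1).
Proof.
move=> f0 mf; have -> : (fun x => (f x)^-1) = (fun x => f x `^ (-1)).
  by apply/funext => x; rewrite powR_inv1 // ltW.
exact: measurableT_comp (measurable_powR _) mf.
Qed.

Lemma measurable_gt_fun d (T : measurableType d) (R : realType)
    (f : T -> R) (a : R) :
  measurable_fun setT f -> measurable [set x | a < f x].
Proof.
move=> mf; rewrite -preimage_itvoy -[X in measurable X]setTI.
exact: mf measurableT _ (measurable_itv _).
Qed.

Lemma indic_le_indicD (T : Type) (R : numDomainType) (A B : set T)
    (h : T -> R) x :
  0 <= h x -> (B x -> ~ A x -> 1 <= h x) -> \1_B x <= \1_A x + h x.
Proof.
move=> h0 hB; rewrite !indicE.
have [Ax|nAx] := boolP (x \in A).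
  by apply: ler_wpDr => //; case: (x \in B).
have [Bx|_] := boolP (x \in B); rewrite add0r //.
by apply: hB; [exact: set_mem | move/mem_set => Ax; rewrite Ax in nAx].
Qed.

Section code_expectation.
Local Open Scope ereal_scope.
Context (R : realType) (dX dY1 dY2 : measure_display)
    (X : measurableType dX) (Y1 : measurableType dY1) (Y2 : measurableType dY2)
    (PX : probability X R) (M1 M2 : nat) (c : sr_code R X Y1 Y2 M1 M2).
Implicit Types h g : X * Y1 * Y2 -> \bar R.

Definition code_integrand h (x : X) : \bar R :=
  \sum_(w1 < M1) \sum_(w2 < M2 %/ M1)
     ((enc1 c x w1 * enc2 c x w1 w2)%:E *
      \int[dec1 c w1]_y1 \int[dec2 c w1 w2]_y2 h (x, y1, y2)).

Definition code_expect h : \bar R := \int[PX]_x code_integrand h x.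

Lemma code_probE E : code_prob PX c E = code_expect (fun p => (\1_E p)%:E).
Proof. by []. Qed.

Let enc_ge0 x w1 w2 : 0 <= (enc1 c x w1 * enc2 c x w1 w2)%:E.
Proof. by rewrite lee_fin mulr_ge0 // ?enc1_ge0 ?enc2_ge0. Qed.

Let enc1_le1 x w1 : (enc1 c x w1 <= 1)%R.
Proof. exact: sum1_ge0_le1 (enc1_ge0 c x) (enc1_sum1 c x). Qed.

Let enc2_le1 x w1 w2 : (enc2 c x w1 w2 <= 1)%R.
Proof. exact: sum1_ge0_le1 (enc2_ge0 c x w1) (enc2_sum1 c x w1). Qed.

Let inner_ge0 h x w1 w2 : (forall p, 0 <= h p) ->
  0 <= \int[dec1 c w1]_y1 \int[dec2 c w1 w2]_y2 h (x, y1, y2).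
Proof. by move=> h0; apply: integral_ge0 => y1 _; apply: integral_ge0. Qed.

Let code_integrand_ge0 h x : (forall p, 0 <= h p) -> 0 <= code_integrand h x.
Proof.
move=> h0; apply: sume_ge0 => w1 _; apply: sume_ge0 => w2 _.
by apply: mule_ge0 => //; exact: inner_ge0.
Qed.

Lemma le_code_expect h g : (forall p, 0 <= h p) -> (forall p, h p <= g p) ->
  code_expect h <= code_expect g.
Proof.
move=> h0 hg; apply: ge0_le_integralT => x; first exact: code_integrand_ge0.
apply: lee_sum => w1 _; apply: lee_sum => w2 _.
apply: lee_wpmul2l => //; apply: ge0_le_integralT => y1.
  by apply: integral_ge0.
exact: ge0_le_integralT.
Qed.

Let measurable_inner2 h w1 w2 :
  measurable_fun setT h -> (forall p, 0 <= h p) ->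
  measurable_fun setT (fun q : X * Y1 => \int[dec2 c w1 w2]_y2 h (q, y2)).
Proof. exact: measurable_fun_fubini_tonelli_F. Qed.

Let measurable_inner1 h w1 w2 :
  measurable_fun setT h -> (forall p, 0 <= h p) ->
  measurable_fun setT
    (fun x => \int[dec1 c w1]_y1 \int[dec2 c w1 w2]_y2 h (x, y1, y2)).
Proof.
move=> mh h0; apply: (measurable_fun_fubini_tonelli_F
  (fun q => \int[dec2 c w1 w2]_y2 h (q, y2))); first exact: measurable_inner2.
by move=> q; exact: integral_ge0.
Qed.

Let measurable_code_integrand h :
  measurable_fun setT h -> (forall p, 0 <= h p) ->
  measurable_fun setT (code_integrand h).
Proof.
move=> mh h0; apply: emeasurable_sum => w1; apply: emeasurable_sum => w2.
apply: emeasurable_funM; last exact: measurable_inner1.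
by apply/measurable_EFinP; apply: measurable_funM;
  [exact: enc1_meas | exact: enc2_meas].
Qed.

Lemma code_expectZl h (k : R) :
  measurable_fun setT h -> (forall p, 0 <= h p) -> (0 <= k)%R ->
  code_expect (fun p => k%:E * h p) = k%:E * code_expect h.
Proof.
move=> mh h0 k0; rewrite /code_expect -ge0_integralZl_EFin //; last 2 first.
- by move=> x _; exact: code_integrand_ge0.
- exact: measurable_code_integrand.
apply: eq_integral => x _; rewrite ge0_sume_distrr => [|w1 _]; last first.
  by apply: sume_ge0 => w2 _; apply: mule_ge0 => //; exact: inner_ge0.
apply: eq_bigr => w1 _; rewrite ge0_sume_distrr => [|w2 _]; last first.
  by apply: mule_ge0 => //; exact: inner_ge0.
apply: eq_bigr => w2 _; rewrite muleCA; congr (_ * _).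
rewrite -ge0_integralZl_EFin //; last 2 first.
- by move=> y1 _; exact: integral_ge0.
- exact: (measurable_fun_pair2 x (measurable_inner2 w1 w2 mh h0)).
apply: eq_integral => y1 _; rewrite ge0_integralZl_EFin //.
exact: (measurable_fun_pair2 (x, y1) mh).
Qed.

Lemma code_expectD h g :
  measurable_fun setT h -> (forall p, 0 <= h p) ->
  measurable_fun setT g -> (forall p, 0 <= g p) ->
  code_expect (fun p => h p + g p) = code_expect h + code_expect g.
Proof.
move=> mh h0 mg g0; rewrite /code_expect -ge0_integralD //; last 4 first.
- by move=> x _; exact: code_integrand_ge0.
- exact: measurable_code_integrand.
- by move=> x _; exact: code_integrand_ge0.
- exact: measurable_code_integrand.
apply: eq_integral => x _; rewrite /code_integrand -big_split.
apply: eq_bigr => w1 _; rewrite -big_split; apply: eq_bigr => w2 _ /=.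
rewrite -ge0_muleDr ?inner_ge0 //; congr (_ * _).
rewrite -ge0_integralD //; last 4 first.
- by move=> y1 _; exact: integral_ge0.
- exact: (measurable_fun_pair2 x (measurable_inner2 w1 w2 mh h0)).
- by move=> y1 _; exact: integral_ge0.
- exact: (measurable_fun_pair2 x (measurable_inner2 w1 w2 mg g0)).
apply: eq_integral => y1 _; rewrite ge0_integralD //.
- exact: (measurable_fun_pair2 (x, y1) mh).
- exact: (measurable_fun_pair2 (x, y1) mg).
Qed.

Lemma code_expect_fst_le (g : X * Y1 -> \bar R) :
  measurable_fun setT g -> (forall q, 0 <= g q) ->
  (forall y1, \int[PX]_x g (x, y1) <= 1) ->
  code_expect (fun p => g p.1) <= M1%:R%:E.
Proof.
move=> mg g0 gle.
have integrandE x : code_integrand (fun p => g p.1) x =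
    \sum_(w1 < M1) (enc1 c x w1)%:E * \int[dec1 c w1]_y1 g (x, y1).
  apply: eq_bigr => w1 _; transitivity (\sum_(w2 < M2 %/ M1)
      ((enc1 c x w1 * enc2 c x w1 w2)%:E * \int[dec1 c w1]_y1 g (x, y1))).
    apply: eq_bigr => w2 _; congr (_ * _); apply: eq_integral => y1 _.
    exact: (probability_integral_cst (dec2 c w1 w2) (g (x, y1))).
  rewrite -ge0_sume_distrl; last by move=> w2 _; exact: enc_ge0.
  by rewrite sumEFin -mulr_sumr enc2_sum1 mulr1.
apply: (@le_trans _ _
    (\int[PX]_x \sum_(w1 < M1) \int[dec1 c w1]_y1 g (x, y1))).
  apply: ge0_le_integralT => x; first exact: code_integrand_ge0.
  rewrite integrandE; apply: lee_sum => w1 _.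
  rewrite -[leRHS]mul1e; apply: lee_wpmul2r; first exact: integral_ge0.
  by rewrite lee_fin.
rewrite ge0_integral_sum //; last 2 first.
- by move=> w1; exact: measurable_fun_fubini_tonelli_F.
- by move=> w1 x _; exact: integral_ge0.
apply: (@le_trans _ _ (\sum_(w1 < M1) 1%:E)).
  by apply: lee_sum => w1 _; exact: integral_integral_le1.
by rewrite sumEFin sumr_const card_ord.
Qed.

Lemma code_expect_le h :
  measurable_fun setT h -> (forall p, 0 <= h p) ->
  (forall y1 y2, \int[PX]_x h (x, y1, y2) <= 1) ->
  code_expect h <= M2%:R%:E.
Proof.
move=> mh h0 hle.
have inner_le1 w1 w2 :
    \int[PX]_x \int[dec1 c w1]_y1 \int[dec2 c w1 w2]_y2 h (x, y1, y2) <= 1.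
  apply: (@integral_integral_le1 _ _ _ _ _ PX _
      (fun q => \int[dec2 c w1 w2]_y2 h (q, y2)))
    => [|q|y1]; first exact: measurable_inner2.
    exact: integral_ge0.
  apply: (@integral_integral_le1 _ _ _ _ _ PX _ (fun q => h (q.1, y1, q.2)))
    => // [|q].
    apply: measurableT_comp mh _; apply: measurable_fun_pair => //.
    exact: measurable_fun_pair.
  exact: hle.
apply: (@le_trans _ _ (\int[PX]_x \sum_(w1 < M1) \sum_(w2 < M2 %/ M1)
    \int[dec1 c w1]_y1 \int[dec2 c w1 w2]_y2 h (x, y1, y2))).
  apply: ge0_le_integralT => x; first exact: code_integrand_ge0.
  apply: lee_sum => w1 _; apply: lee_sum => w2 _.
  rewrite -[leRHS]mul1e; apply: lee_wpmul2r; first exact: inner_ge0.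
  by rewrite lee_fin mulr_ile1 ?enc1_ge0 ?enc2_ge0.
rewrite ge0_integral_sum //; last 2 first.
- by move=> w1; apply: emeasurable_sum => w2; exact: measurable_inner1.
- by move=> w1 x _; apply: sume_ge0 => w2 _; exact: inner_ge0.
apply: (@le_trans _ _ (\sum_(w1 < M1) \sum_(w2 < M2 %/ M1) 1%:E)).
  apply: lee_sum => w1 _; rewrite ge0_integral_sum //; last 2 first.
  - by move=> w2; exact: measurable_inner1.
  - by move=> w2 x _; exact: inner_ge0.
  by apply: lee_sum => w2 _; exact: inner_le1.
rewrite (eq_bigr (fun=> (M2 %/ M1)%:R%:E)) => [|w1 _]; last first.
  by rewrite sumEFin sumr_const card_ord.
by rewrite sumEFin sumr_const card_ord lee_fin -mulrnA ler_nat leq_trunc_div.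
Qed.

Lemma code_prob_le_expect (A B : set (X * Y1 * Y2)) (h : X * Y1 * Y2 -> R) :
  measurable A -> measurable_fun setT h -> (forall p, 0 <= h p)%R ->
  (forall p, B p -> ~ A p -> 1 <= h p)%R ->
  code_prob PX c B <= code_prob PX c A + code_expect (fun p => (h p)%:E).
Proof.
move=> mA mh h0 hBA; rewrite !code_probE.
have mIA : measurable_fun setT (fun p => (\1_A p)%:E : \bar R).
  by apply/measurable_EFinP; exact: measurable_indic.
rewrite -(code_expectD mIA); last 3 first.
- by move=> p; rewrite lee_fin.
- exact/measurable_EFinP.
- by move=> p; rewrite lee_fin.
apply: le_code_expect => p; first by rewrite lee_fin.
by rewrite -EFinD lee_fin; apply: indic_le_indicD; [exact: h0 | exact: hBA].
Qed.

End code_expectation.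

Lemma ge1_ln_ge0 (R : realType) (z : R) : 0 < z -> 0 <= ln z -> 1 <= z.
Proof. by move=> z0; rewrite -ln1 ler_ln // posrE. Qed.

Section successive_refinement.
Context (R : realType) (dX dY1 dY2 : measure_display)
    (X : measurableType dX) (Y1 : measurableType dY1) (Y2 : measurableType dY2)
    (PX : probability X R) (dist1 : X * Y1 -> R) (dist2 : X * Y2 -> R)
    (nu1 lambda1 lambda2 : R) (beta1 : X -> R) (beta2 : X * Y1 -> R)
    (M1 M2 : nat) (c : sr_code R X Y1 Y2 M1 M2) (d1 d2 gamma1 gamma2 : R).
Hypotheses (mdist1 : measurable_fun setT dist1)
  (mdist2 : measurable_fun setT dist2).
Hypotheses (nu1_ge0 : 0 <= nu1) (lambda1_ge0 : 0 <= lambda1)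
  (lambda2_ge0 : 0 <= lambda2).
Hypotheses (mbeta1 : measurable_fun setT beta1)
  (beta1_gt0 : forall x, 0 < beta1 x).
Hypotheses (mbeta2 : measurable_fun setT beta2)
  (beta2_gt0 : forall q, 0 < beta2 q).
Hypotheses (M1_gt0 : (0 < M1)%N) (M1_le_M2 : (M1 <= M2)%N).

Definition sigma1_integrand x y1 : R :=
  expR (- (lambda1 / (1 + nu1)) * dist1 (x, y1))
  * beta2 (x, y1) `^ (1 / (1 + nu1)) / beta1 x.

Definition sigma2_integrand x y1 y2 : R :=
  expR (- (lambda1 / (1 + nu1)) * dist1 (x, y1) - lambda2 * dist2 (x, y2))
  / (beta1 x * beta2 (x, y1) `^ (nu1 / (1 + nu1))).

Definition F1 x y1 : R :=
  ln (beta2 (x, y1) `^ (1 / (1 + nu1)) / beta1 x) - lambda1 / (1 + nu1) * d1.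

Definition F x : R :=
  (1 + nu1) * ln (1 / beta1 x) - lambda1 * d1 - lambda2 * d2
  - nu1 * ln M1%:R.

Let M1_pos : 0 < M1%:R :> R. Proof. by rewrite ltr0n. Qed.
Let M2_pos : 0 < M2%:R :> R. Proof. by rewrite ltr0n (leq_trans M1_gt0). Qed.

Lemma sigma1_integrand_ge1 x y1 : dist1 (x, y1) <= d1 ->
  ln M1%:R + gamma1 <= F1 x y1 ->
  1 <= expR (- gamma1) / M1%:R * sigma1_integrand x y1.
Proof.
rewrite /F1 /sigma1_integrand => hd hF.
have b1 := beta1_gt0 x; have b2 := beta2_gt0 (x, y1).
apply: ge1_ln_ge0.
  by rewrite mulr_gt0 ?divr_gt0 ?mulr_gt0 ?expR_gt0 ?powR_gt0.
rewrite lnM ?ln_div ?lnM ?posrE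
  ?(mulr_gt0, divr_gt0, invr_gt0, expR_gt0, powR_gt0) //.
rewrite !expRK !ln_powR; move: hF; rewrite ln_div ?posrE ?powR_gt0 // ln_powR.
have a_ge0 : 0 <= lambda1 / (1 + nu1) by rewrite divr_ge0 // addr_ge0.
have := ler_wpM2l a_ge0 hd; lra.
Qed.

Lemma sigma2_integrand_ge1 x y1 y2 :
  dist1 (x, y1) <= d1 -> dist2 (x, y2) <= d2 ->
  F1 x y1 < ln M1%:R + gamma1 -> ln M2%:R + nu1 * gamma1 + gamma2 <= F x ->
  1 <= expR (- gamma2) / M2%:R * sigma2_integrand x y1 y2.
Proof.
rewrite /F1 /F /sigma2_integrand => hd1 hd2 hF1 hF.
have b1 := beta1_gt0 x; have b2 := beta2_gt0 (x, y1).
apply: ge1_ln_ge0.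
  by rewrite mulr_gt0 ?divr_gt0 ?mulr_gt0 ?expR_gt0 ?powR_gt0.
rewrite lnM ?ln_div ?lnM ?posrE
  ?(mulr_gt0, divr_gt0, invr_gt0, expR_gt0, powR_gt0) //.
rewrite !expRK !ln_powR.
have lnb1 : ln (1 / beta1 x) = - ln (beta1 x) by rewrite div1r lnV // posrE.
rewrite lnb1 in hF; move: hF1 hF; rewrite ln_div ?posrE ?powR_gt0 // ln_powR.
have nu1_pos : 0 < 1 + nu1 by rewrite ltr_wpDr.
have -> : nu1 / (1 + nu1) = nu1 * (1 / (1 + nu1)) by rewrite mul1r.
set a := lambda1 / (1 + nu1); set s := 1 / (1 + nu1) => hF1 hF.
have a_ge0 : 0 <= a by rewrite divr_ge0 // ltW.
have lambda1E : lambda1 * d1 = a * d1 + nu1 * (a * d1).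
  by rewrite /a; field; rewrite gt_eqF.
have := ler_wpM2l nu1_ge0 (ltW hF1).
have := ler_wpM2l a_ge0 hd1; have := ler_wpM2l lambda2_ge0 hd2.
rewrite lambda1E in hF; lra.
Qed.

Lemma measurable_sigma1_integrand :
  measurable_fun setT (fun q : X * Y1 => sigma1_integrand q.1 q.2).
Proof.
have mdist1' : measurable_fun setT (fun q : X * Y1 => dist1 (q.1, q.2)).
  by apply: measurableT_comp mdist1 _; exact: measurable_fun_pair.
have mbeta2' : measurable_fun setT (fun q : X * Y1 => beta2 (q.1, q.2)).
  by apply: measurableT_comp mbeta2 _; exact: measurable_fun_pair.
apply: measurable_funM; first apply: measurable_funM.
- by apply: measurableT_comp => //; exact: measurable_funM.
- exact: measurableT_comp (measurable_powR _) mbeta2'.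
- apply: (measurable_funV_gt0 (f := fun q : X * Y1 => beta1 q.1)) => // q.
  exact: measurableT_comp.
Qed.

Let measurable_dist1 : measurable_fun setT
  (fun p : X * Y1 * Y2 => dist1 (p.1.1, p.1.2)).
Proof.
apply: measurableT_comp mdist1 _.
by apply: measurable_fun_pair; exact: measurableT_comp.
Qed.

Let measurable_dist2 : measurable_fun setT
  (fun p : X * Y1 * Y2 => dist2 (p.1.1, p.2)).
Proof.
apply: measurableT_comp mdist2 _.
by apply: measurable_fun_pair => //; exact: measurableT_comp.
Qed.

Lemma measurable_sigma2_integrand : measurable_fun setT
  (fun p : X * Y1 * Y2 => sigma2_integrand p.1.1 p.1.2 p.2).
Proof.
have mfst2 : measurable_fun setT (fun p : X * Y1 * Y2 => p.1.1).
  by apply: measurableT_comp; exact: measurable_fst.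
have mbeta2' : measurable_fun setT
    (fun p : X * Y1 * Y2 => beta2 (p.1.1, p.1.2)).
  apply: measurableT_comp mbeta2 _; apply: measurable_fun_pair => //.
  exact: measurableT_comp measurable_snd measurable_fst.
apply: measurable_funM.
  apply: measurableT_comp => //.
  by apply: measurable_funB; exact: measurable_funM.
apply: measurable_funV_gt0 => [p|].
  by rewrite mulr_gt0 ?powR_gt0.
apply: measurable_funM; first exact: measurableT_comp mbeta1 mfst2.
exact: measurableT_comp (measurable_powR _) mbeta2'.
Qed.

Let sigma1_integrand_ge0 x y1 : 0 <= sigma1_integrand x y1.
Proof. by rewrite divr_ge0 ?mulr_ge0 ?expR_ge0 ?powR_ge0 // ltW. Qed.

Let sigma2_integrand_ge0 x y1 y2 : 0 <= sigma2_integrand x y1 y2.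
Proof. by rewrite divr_ge0 ?mulr_ge0 ?expR_ge0 ?powR_ge0 // ltW. Qed.

Hypothesis Sigma1_le1 :
  forall y1, (\int[PX]_x (sigma1_integrand x y1)%:E <= 1)%E.
Hypothesis Sigma2_le1 :
  forall y1 y2, (\int[PX]_x (sigma2_integrand x y1 y2)%:E <= 1)%E.

Lemma code_expect_sigma1_le (k : R) : 0 <= k ->
  (code_expect PX c (fun p => (k * sigma1_integrand p.1.1 p.1.2)%:E)
   <= (k * M1%:R)%:E)%E.
Proof.
move=> k_ge0.
have -> : (fun p : X * Y1 * Y2 => (k * sigma1_integrand p.1.1 p.1.2)%:E)
    = (fun p => k%:E * (sigma1_integrand p.1.1 p.1.2)%:E)%E.
  by apply/funext => p; rewrite EFinM.
have mg : measurable_fun setT (fun q : X * Y1 => (sigma1_integrand q.1 q.2)%:E).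
  by apply/measurable_EFinP; exact: measurable_sigma1_integrand.
rewrite code_expectZl // ?EFinM; last 2 first.
- by apply: measurableT_comp mg _; exact: measurable_fst.
- by move=> p; rewrite lee_fin.
apply: lee_wpmul2l; first by rewrite lee_fin.
by apply: code_expect_fst_le mg _ Sigma1_le1 => q; rewrite lee_fin.
Qed.

Lemma code_expect_sigma2_le (k : R) : 0 <= k ->
  (code_expect PX c (fun p => (k * sigma2_integrand p.1.1 p.1.2 p.2)%:E)
   <= (k * M2%:R)%:E)%E.
Proof.
move=> k_ge0.
have -> : (fun p : X * Y1 * Y2 => (k * sigma2_integrand p.1.1 p.1.2 p.2)%:E)
    = (fun p => k%:E * (sigma2_integrand p.1.1 p.1.2 p.2)%:E)%E.
  by apply/funext => p; rewrite EFinM.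
have mg : measurable_fun setT
    (fun p : X * Y1 * Y2 => (sigma2_integrand p.1.1 p.1.2 p.2)%:E).
  by apply/measurable_EFinP; exact: measurable_sigma2_integrand.
rewrite code_expectZl // ?EFinM; last by move=> p; rewrite lee_fin.
apply: lee_wpmul2l; first by rewrite lee_fin.
by apply: code_expect_le mg _ Sigma2_le1 => p; rewrite lee_fin.
Qed.

Lemma code_prob_F1_le :
  (code_prob PX c [set p | (ln M1%:R + gamma1 <= F1 p.1.1 p.1.2)%R]
   <= code_prob PX c [set p | (d1 < dist1 (p.1.1, p.1.2))%R]
      + (expR (- gamma1))%:E)%E.
Proof.
have k1_ge0 : 0 <= expR (- gamma1) / M1%:R by rewrite divr_ge0 ?expR_ge0.
have mA1 : measurable [set p : X * Y1 * Y2 | (d1 < dist1 (p.1.1, p.1.2))%R].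
  exact: measurable_gt_fun.
apply: le_trans (code_prob_le_expect PX c
  (h := fun p => expR (- gamma1) / M1%:R * sigma1_integrand p.1.1 p.1.2)
  mA1 _ _ _) _.
- apply: measurable_funM => //.
  exact: measurableT_comp measurable_sigma1_integrand measurable_fst.
- by move=> p; rewrite mulr_ge0.
- move=> [[x y1] y2] /= hF /negP; rewrite -leNgt => hd.
  exact: sigma1_integrand_ge1.
apply: leeD2l; apply: le_trans (code_expect_sigma1_le k1_ge0) _.
by rewrite divfK // gt_eqF.
Qed.

Lemma code_prob_F_le :
  (code_prob PX c
     ([set p | (ln M2%:R + nu1 * gamma1 + gamma2 <= F p.1.1)%R]
      `|` [set p | (ln M1%:R + gamma1 <= F1 p.1.1 p.1.2)%R])
   <= code_prob PX c
        [set p | (d1 < dist1 (p.1.1, p.1.2))%R \/ (d2 < dist2 (p.1.1, p.2))%R]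
      + (expR (- gamma2))%:E + (expR (- gamma1))%:E)%E.
Proof.
set k1 := expR (- gamma1) / M1%:R; set k2 := expR (- gamma2) / M2%:R.
have k1_ge0 : 0 <= k1 by rewrite divr_ge0 ?expR_ge0.
have k2_ge0 : 0 <= k2 by rewrite divr_ge0 ?expR_ge0.
pose h1 (p : X * Y1 * Y2) := k1 * sigma1_integrand p.1.1 p.1.2.
pose h2 (p : X * Y1 * Y2) := k2 * sigma2_integrand p.1.1 p.1.2 p.2.
have mh1 : measurable_fun setT h1.
  apply: measurable_funM => //.
  exact: measurableT_comp measurable_sigma1_integrand measurable_fst.
have mh2 : measurable_fun setT h2.
  by apply: measurable_funM => //; exact: measurable_sigma2_integrand.
have h1_ge0 p : 0 <= h1 p by rewrite mulr_ge0.
have h2_ge0 p : 0 <= h2 p by rewrite mulr_ge0.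
have mA2 : measurable [set p : X * Y1 * Y2 |
    (d1 < dist1 (p.1.1, p.1.2))%R \/ (d2 < dist2 (p.1.1, p.2))%R].
  by apply: measurableU; exact: measurable_gt_fun.
apply: le_trans (code_prob_le_expect PX c (h := fun p => h1 p + h2 p)
  mA2 _ _ _) _.
- exact: measurable_funD.
- by move=> p; rewrite addr_ge0.
- move=> [[x y1] y2] /= hB hA.
  have hd1 : dist1 (x, y1) <= d1.
    by rewrite leNgt; apply/negP => ?; apply: hA; left.
  have hd2 : dist2 (x, y2) <= d2.
    by rewrite leNgt; apply/negP => ?; apply: hA; right.
  have := h1_ge0 (x, y1, y2); have := h2_ge0 (x, y1, y2); rewrite /h1 /h2 /=.
  have [hF1|hF1] := leP (ln M1%:R + gamma1) (F1 x y1).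
    by have := sigma1_integrand_ge1 hd1 hF1; rewrite -/k1; lra.
  case: hB => [hF|]; last by rewrite leNgt hF1.
  by have := sigma2_integrand_ge1 hd1 hd2 hF1 hF; rewrite -/k2; lra.
rewrite -[leRHS]addeA; apply: leeD2l.
have -> : (fun p => (h1 p + h2 p)%:E) = (fun p => (h1 p)%:E + (h2 p)%:E)%E.
  by apply/funext => p; rewrite EFinD.
rewrite code_expectD; last 4 first.
- exact/measurable_EFinP.
- by move=> p; rewrite lee_fin.
- exact/measurable_EFinP.
- by move=> p; rewrite lee_fin.
rewrite [leRHS]addeC; apply: leeD.
  by apply: le_trans (code_expect_sigma1_le k1_ge0) _; rewrite divfK // gt_eqF.
by apply: le_trans (code_expect_sigma2_le k2_ge0) _; rewrite divfK // gt_eqF.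
Qed.

End successive_refinement.

Theorem corollary2 (R : realType) (dX dY1 dY2 : measure_display)
    (X : measurableType dX) (Y1 : measurableType dY1) (Y2 : measurableType dY2)
    (PX : probability X R)
    (dist1 : X * Y1 -> R) (dist2 : X * Y2 -> R)
    (nu1 lambda1 lambda2 : R) (beta1 : X -> R) (beta2 : X * Y1 -> R)
    (M1 M2 : nat) (c : sr_code R X Y1 Y2 M1 M2)
    (d1 d2 eps1 eps2 : R) :
  (forall x : X, measurable [set x]) ->
  (forall y : Y1, measurable [set y]) ->
  (forall y : Y2, measurable [set y]) ->
  (forall p, 0 <= dist1 p) -> measurable_fun setT dist1 ->
  (forall p, 0 <= dist2 p) -> measurable_fun setT dist2 ->
  0 <= nu1 -> 0 <= lambda1 -> 0 <= lambda2 ->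
  measurable_fun setT beta1 -> (forall x, 0 < beta1 x) ->
  measurable_fun setT beta2 -> (forall p, 0 < beta2 p) ->
  (forall (y1 : Y1) (y2 : Y2),
     (\int[PX]_x
        (expR (- (lambda1 / (1 + nu1)) * dist1 (x, y1) - lambda2 * dist2 (x, y2))
         / (beta1 x * beta2 (x, y1) `^ (nu1 / (1 + nu1))))%:E <= 1)%E) ->
  (forall y1 : Y1,
     (\int[PX]_x
        (expR (- (lambda1 / (1 + nu1)) * dist1 (x, y1))
         * beta2 (x, y1) `^ (1 / (1 + nu1)) / beta1 x)%:E <= 1)%E) ->
  (0 < M1)%N -> (M1 <= M2)%N ->
  (code_prob PX c [set p | (d1 < dist1 (p.1.1, p.1.2))%R] <= eps1%:E)%E ->
  (code_prob PX c [set p | (d1 < dist1 (p.1.1, p.1.2))%R \/ (d2 < dist2 (p.1.1, p.2))%R]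
     <= eps2%:E)%E ->
  let F1 := fun p : X * Y1 * Y2 =>
    ln (beta2 (p.1.1, p.1.2) `^ (1 / (1 + nu1)) / beta1 p.1.1)
    - lambda1 / (1 + nu1) * d1 in
  let F := fun p : X * Y1 * Y2 =>
    (1 + nu1) * ln (1 / beta1 p.1.1) - lambda1 * d1 - lambda2 * d2
    - nu1 * ln M1%:R in
  forall gamma1 gamma2 : R, 0 < gamma1 -> 0 < gamma2 ->
    (eps1%:E >= code_prob PX c [set p | (ln M1%:R + gamma1 <= F1 p)%R]
                - (expR (- gamma1))%:E)%E /\
    (eps2%:E >= code_prob PX c
        ([set p | (ln M2%:R + nu1 * gamma1 + gamma2 <= F p)%R]
         `|` [set p | (ln M1%:R + gamma1 <= F1 p)%R])
        - (expR (- gamma1))%:E - (expR (- gamma2))%:E)%E.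
Proof.
move=> _ _ _ _ mdist1 _ mdist2 nu1_ge0 lambda1_ge0 lambda2_ge0 mbeta1 beta1_gt0
  mbeta2 beta2_gt0 Sigma2_le1 Sigma1_le1 M1_gt0 M1_le_M2 excess1 excess2
  F1 F gamma1 gamma2 _ _.
split.
  rewrite leeBlDr //; apply: le_trans (leeD2r _ excess1).
  exact: code_prob_F1_le.
rewrite leeBlDr // leeBlDr //; apply: le_trans (leeD2r _ (leeD2r _ excess2)).
exact: code_prob_F_le.
Qed.
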